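(* Let $\mu$ be a probability measure supported on a symmetric convex domain $\Omega\subset\mathbb R^n$ with $\int_\Omega|x|\,d\mu(x)<+\infty$, and let $h$ be a positive Borel function on $\Omega$ with $b^{-1}\le h\le b$ for some $b>1$ and $\int_\Omega h\,d\mu=1$. Let $d\nu=h\,d\mu$. If $\mu$ satisfies the dilation inequality for $\mathcal K_s^n(\Omega)$ with constant $\kappa>0$, then $\nu$ satisfies the dilation inequality for $\mathcal K_s^n(\Omega)$ with constant $b^{-2}\kappa$.
   Context: Symmetric set: $K=-K$. Symmetric convex domain: nonempty open convex $\Omega=-\Omega\subset\mathbb R^n$. $\mathcal K_s^n(\Omega)$: nonempty symmetric open convex subsets of $\Omega$. For Borel $A\subset\mathbb R^n$, $\varepsilon\in(0,1)$: $A_\varepsilon:=A\cup\{x:\exists y,\ \int_0^1\mathbf 1_A((1-t)x+ty)\,dt>1-\varepsilon\}$; for a probability measure $\mu$, $\mu^*(A):=\liminf_{\varepsilon\downarrow0}(\mu(A_\varepsilon)-\mu(A))/\varepsilon$. $\mu$ satisfies the dilation inequality for $\mathcal K_s^n(\Omega)$ with $\kappa>0$ if $\mu^*(K)\ge-\kappa(1-\mu(K))\log(1-\mu(K))$ for all $K\in\mathcal K_s^n(\Omega)$. *)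

From HB Require Import structures.
From mathcomp Require Import all_boot all_order all_algebra.
From mathcomp Require Import all_classical all_reals all_analysis.
Set Implicit Arguments. Unset Strict Implicit. Unset Printing Implicit Defensive.
Import Order.TTheory GRing.Theory Num.Theory.
Import numFieldNormedType.Exports.
Local Open Scope classical_set_scope.
Local Open Scope ring_scope.

(* R^n as row vectors, with its Borel sigma-algebra (generated by the open sets
   of the usual (product = Euclidean) topology). *)
Definition Rn (R : realType) (n : nat) : Type :=
  g_sigma_algebraType (@open 'rV[R]_n).

Definition euclid_norm (R : realType) (n : nat) (x : 'rV[R]_n) : R :=
  Num.sqrt (\sum_(i < n) x ord0 i ^+ 2).

Definition symmetric_set (R : realType) (n : nat) (K : set 'rV[R]_n) : Prop :=
  [set - x | x in K] = K.

Definition convex_set_Rn (R : realType) (n : nat) (K : set 'rV[R]_n) : Prop :=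
  forall x y t, K x -> K y -> 0 <= t <= 1 -> K ((1 - t) *: x + t *: y).

Definition sym_convex_domain (R : realType) (n : nat) (Om : set 'rV[R]_n) : Prop :=
  Om !=set0 /\ open Om /\ convex_set_Rn Om /\ symmetric_set Om.

Definition Ksn (R : realType) (n : nat) (Om : set 'rV[R]_n) : set (set 'rV[R]_n) :=
  [set K | K !=set0 /\ symmetric_set K /\ open K /\ convex_set_Rn K /\ K `<=` Om].

Definition dilate (R : realType) (n : nat) (A : set 'rV[R]_n) (eps : R) : set 'rV[R]_n :=
  A `|` [set x | exists y : 'rV[R]_n,
     ((1 - eps)%:E < \int[@lebesgue_measure R]_(t in `[0%R, 1%R])
                        ((\1_A ((1 - t) *: x + t *: y)) : R)%:E)%E].

Definition dil_deriv (R : realType) (n : nat) (mu : set (Rn R n) -> \bar R)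
    (A : set 'rV[R]_n) : \bar R :=
  limf_einf (fun eps : R => ((mu (dilate A eps) - mu A) * (eps^-1)%:E)%E)
            (0%R : R)^'+.

Definition dilation_ineq (R : realType) (n : nat) (mu : set (Rn R n) -> \bar R)
    (Om : set 'rV[R]_n) (kappa : R) : Prop :=
  forall K, Ksn Om K ->
    ((- kappa * (1 - fine (mu K)) * ln (1 - fine (mu K)))%:E <= dil_deriv mu K)%E.

From HB Require Import structures.
From mathcomp Require Import all_boot all_order all_algebra.
From mathcomp Require Import all_classical all_reals all_analysis.
From mathcomp Require Import ring lra measurable_realfun.
Set Implicit Arguments. Unset Strict Implicit. Unset Printing Implicit Defensive.
Import Order.TTheory GRing.Theory Num.Theory.
Import numFieldNormedType.Exports.
Local Open Scope classical_set_scope.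
Local Open Scope ring_scope.

(* The proof
   combines three facts.
   1. Every dilation set K_eps of an open convex K is open, hence Borel, and
      contains K; so nu(K_eps) - nu(K) = \int_{K_eps \ K} h dmu
      >= b^-1 (mu(K_eps) - mu(K)), because mu is carried by Om.
      Passing to the liminf as eps -> 0+ gives nu^*(K) >= b^-1 mu^*(K).
   2. Similarly nu(K) <= b mu(K) and 1 - nu(K) <= b (1 - mu(K)).
   3. With phi(t) = - t ln t, these two comparisons give
      phi(1 - nu(K)) <= b phi(1 - mu(K)); this follows from the concavity of ln,
      which makes phi(t) / (1 - t) nondecreasing on (0, 1).
   Hence nu^*(K) >= b^-1 kappa phi(1 - mu(K)) >= b^-2 kappa phi(1 - nu(K)). *)

Section EntropyComparison.
Variable R : realType.

(* Chord slopes of the concave function ln issued from 1 decrease: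
   y |-> ln y / (y - 1) is nonincreasing on (1, +oo). *)
Lemma ln_chord_slope (y1 y2 : R) : 1 <= y1 -> y1 <= y2 ->
  ln y2 * (y1 - 1) <= ln y1 * (y2 - 1).
Proof.
move=> y1_ge1 y12.
have [y2_eq1|y2_neq1] := eqVneq y2 1.
  have y1_eq1 : y1 = 1 by apply/le_anti; rewrite y1_ge1 -y2_eq1 y12.
  by rewrite y1_eq1 y2_eq1 subrr !mulr0.
have y2_gt1 : 1 < y2 by rewrite lt_def y2_neq1 (le_trans y1_ge1 y12).
set l := (y1 - 1) / (y2 - 1).
have l0 : 0 <= l by rewrite divr_ge0 // subr_ge0 // ltW.
have l1 : l <= 1 by rewrite ler_pdivrMr ?subr_gt0 // mul1r lerD2r.
have := @concave_ln R (Itv01 l0 l1) y2 1 (lt_trans ltr01 y2_gt1) ltr01.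
rewrite !convRE /= ln1 mulr0 addr0 mulr1.
have -> : l * y2 + (1 - l) = y1 by rewrite /l; field; rewrite subr_eq0 gt_eqF.
move=> chord.
have -> : y1 - 1 = l * (y2 - 1) by rewrite /l; field; rewrite subr_eq0 gt_eqF.
by rewrite mulrA [ln y2 * l]mulrC ler_wpM2r // subr_ge0 ltW.
Qed.

(* With phi(t) = - t ln t, the ratio phi(t) / (1 - t) is nondecreasing on (0, 1):
   this is the previous lemma for y = 1 / t. *)
Lemma entropy_ratio_le (v w : R) : 0 < v -> v <= w -> w < 1 ->
  - (v * ln v) * (1 - w) <= - (w * ln w) * (1 - v).
Proof.
move=> v0 vw w_lt1; have w0 : 0 < w := lt_le_trans v0 vw.
have iw : 1 <= w^-1 by rewrite invf_ge1 // ltW.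
have ivw : w^-1 <= v^-1 by rewrite lef_pV2 ?posrE.
have := ln_chord_slope iw ivw; rewrite !lnV ?posrE // => slope.
have -> : - (v * ln v) * (1 - w) = (v * w) * (- ln v * (w^-1 - 1)).
  by field; rewrite gt_eqF.
have -> : - (w * ln w) * (1 - v) = (v * w) * (- ln w * (v^-1 - 1)).
  by field; rewrite gt_eqF.
by rewrite ler_wpM2l // mulr_ge0 // ltW.
Qed.

Lemma entropy_comparison (b v w : R) : 1 < b -> 0 <= v <= 1 -> 0 <= w <= 1 ->
  v <= b * w -> 1 - v <= b * (1 - w) -> - (v * ln v) <= b * - (w * ln w).
Proof.
move=> b1 /andP[v0 v1] /andP[w0 w1] vbw vbw'.
have b0 : 0 < b := lt_trans ltr01 b1.
have phi_w0 : 0 <= - (w * ln w) by rewrite oppr_ge0 mulr_ge0_le0 // ln_le0.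
have [w_eq0|w_neq0] := eqVneq w 0.
  have -> : v = 0 by apply/le_anti; rewrite v0 andbT -(mulr0 b) -w_eq0.
  by rewrite mul0r oppr0 mulr_ge0 // ltW.
have wp : 0 < w by rewrite lt_def w_neq0 w0.
have lnw : ln w <= 0 by exact: ln_le0.
have [wv|vw] := leP w v.
  (* phi(v) = v (- ln v) <= v (- ln w) <= b w (- ln w) *)
  have : ln w <= ln v by rewrite ler_ln ?posrE // (lt_le_trans wp wv).
  nra.
have [v_eq0|v_neq0] := eqVneq v 0.
  by rewrite v_eq0 mul0r oppr0 mulr_ge0 // ltW.
have vp : 0 < v by rewrite lt_def v_neq0 v0.
have w_lt1 : w < 1.
  rewrite lt_neqAle w1 andbT; apply/negP => /eqP w_eq1.
  by move: vbw'; rewrite w_eq1 subrr mulr0; lra.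
rewrite -(ler_pM2r (_ : 0 < 1 - w)) ?subr_gt0 //.
apply: (le_trans (entropy_ratio_le vp (ltW vw) w_lt1)).
by rewrite -mulrA mulrCA ler_wpM2l.
Qed.

(* The real inequality behind the theorem, with m = mu(K) and v = nu(K): the
   dilation profile of nu with constant b^-2 kappa is at most b^-1 times the
   profile of mu with constant kappa. *)
Lemma profile_comparison (b kappa m v : R) : 1 < b -> 0 < kappa ->
  0 <= m <= 1 -> 0 <= v <= 1 -> v <= b * m -> 1 - v <= b * (1 - m) ->
  - (b ^- 2 * kappa) * (1 - v) * ln (1 - v) <=
  b^-1 * (- kappa * (1 - m) * ln (1 - m)).
Proof.
move=> b1 k0 /andP[m0 m1] /andP[v0 v1] vbm vbm'.
have b0 : 0 < b := lt_trans ltr01 b1.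
have phi : - ((1 - v) * ln (1 - v)) <= b * - ((1 - m) * ln (1 - m)).
  apply: entropy_comparison => //; try (apply/andP; split); lra.
have -> : - (b ^- 2 * kappa) * (1 - v) * ln (1 - v) =
    (b ^- 2 * kappa) * - ((1 - v) * ln (1 - v)) by ring.
have -> : b^-1 * (- kappa * (1 - m) * ln (1 - m)) =
    (b ^- 2 * kappa) * (b * - ((1 - m) * ln (1 - m))).
  by field; rewrite gt_eqF.
by rewrite ler_wpM2l // mulr_ge0 ?invr_ge0 ?exprn_ge0 ?ltW.
Qed.

End EntropyComparison.

Section LiminfComparison.
Variable R : realType.
Local Open Scope ereal_scope.

Lemma limf_einf_scale_le (f g : R -> \bar R) (F : set_system R) (FF : Filter F)
    (a L : R) : (0 < a)%R -> L%:E <= limf_einf f F ->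
  (\forall x \near F, a%:E * f x <= g x) -> (a * L)%:E <= limf_einf g F.
Proof.
move=> a0; rewrite !limf_einfE => Lf fg.
apply/lee_subgt0Pr => e e0.
have : (L - e / a)%:E < ereal_sup [set ereal_inf (f @` V) | V in F].
  by apply: lt_le_trans Lf; rewrite lte_fin ltrBlDr ltrDl divr_gt0.
move=> /ereal_sup_gt [_ [V FV <-] Vf].
apply: le_ereal_sup_tmp.
exists (ereal_inf (g @` (V `&` [set x | a%:E * f x <= g x]))).
  by exists (V `&` [set x | a%:E * f x <= g x]) => //; apply: filterI.
apply: le_ereal_inf_tmp => _ [x [Vx fgx] <-]; apply: le_trans fgx.
have fx : (L - e / a)%:E <= f x.
  by apply: (le_trans (ltW Vf)); apply: ereal_inf_lbound; exists x.
rewrite -EFinB (_ : (a * L - e = a * (L - e / a))%R); last by field; rewrite gt_eqF.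
by rewrite EFinM lee_pmul2l // lte_fin.
Qed.

End LiminfComparison.

Section DilationSets.
Variables (R : realType) (n : nat).
Local Notation V := 'rV[R]_n.

Definition seg (x y : V) (t : R) : V := (1 - t) *: x + t *: y.

Lemma segE (x y : V) t : seg x y t = x + t *: (y - x).
Proof. by rewrite /seg scalerBl scale1r scalerBr addrA addrAC. Qed.

Lemma seg_continuous (x y : V) : continuous (seg x y).
Proof.
move=> t; rewrite (_ : seg x y = fun t => x + t *: (y - x)); last first.
  by apply/funext => s; rewrite segE.
have cst_x : {for t, continuous (fun=> x)} by exact: cvg_cst.
have lin : {for t, continuous (fun t : R => t *: (y - x))}.
  by apply: continuousZr_tmp; exact: cvg_id.
exact: continuousD cst_x lin.
Qed.

Lemma seg_continuous_start (y : V) (t : R) : continuous (fun x => seg x y t).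
Proof.
move=> x.
have lin : {for x, continuous (fun x : V => (1 - t) *: x)}.
  by apply: (@continuousZl_tmp _ _ _ id); exact: cvg_id.
have cst_ty : {for x, continuous (fun=> t *: y)} by apply: cst_continuous.
exact: continuousD lin cst_ty.
Qed.

Lemma open_seg_preimage (K : set V) x y : open K -> open (seg x y @^-1` K).
Proof. by move=> oK; apply: open_comp => // t _; apply: seg_continuous. Qed.

Lemma measurable_seg_params (K : set V) x y : open K ->
  measurable (seg x y @^-1` K `&` `[0%R, 1%R]).
Proof.
move=> oK; apply: measurableI; last exact: measurable_itv.
by apply: open_measurable; apply: open_seg_preimage.
Qed.

Lemma integral_indic_seg (K : set V) x y : open K ->
  (\int[@lebesgue_measure R]_(t in `[0%R, 1%R])
      ((\1_K ((1 - t) *: x + t *: y)) : R)%:E =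
   @lebesgue_measure R (seg x y @^-1` K `&` `[0%R, 1%R]))%E.
Proof.
move=> oK.
have indicE t : (\1_K ((1 - t) *: x + t *: y) : R) = \1_(seg x y @^-1` K) t by [].
under eq_integral do rewrite indicE.
apply: integral_indic; first exact: measurable_itv.
by apply: open_measurable; apply: open_seg_preimage.
Qed.

Lemma seg_conv x y p q s :
  (1 - s) *: seg x y p + s *: seg x y q = seg x y ((1 - s) * p + s * q).
Proof.
rewrite !segE !scalerDr !scalerA addrACA -[(1 - s) *: x + s *: x]scalerDl.
by rewrite subrK scale1r !scalerDl addrACA.
Qed.

Lemma seg_preimage_interval (K : set V) x y p q : convex_set_Rn K ->
  K (seg x y p) -> K (seg x y q) -> `[p, q] `<=` seg x y @^-1` K.
Proof.
move=> cK Kp Kq t; rewrite /= in_itv /= => /andP[pt tq].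
have [pq|qp] := ltP p q; last first.
  by have -> : t = p by apply/le_anti; rewrite pt (le_trans tq qp).
set s := (t - p) / (q - p).
have s01 : 0 <= s <= 1.
  apply/andP; split; first by rewrite /s divr_ge0 // subr_ge0 // ltW.
  by rewrite /s ler_pdivrMr ?subr_gt0 // mul1r lerD2r.
have -> : t = (1 - s) * p + s * q by rewrite /s; field; rewrite subr_eq0 gt_eqF.
by rewrite /preimage /= -seg_conv; apply: cK.
Qed.

Lemma lebesgue_measure_le_diameter (S : set R) (d : R) : measurable S -> 0 <= d ->
  (forall p q, S p -> S q -> q - p <= d) -> (@lebesgue_measure R S <= d%:E)%E.
Proof.
move=> mS d0 diamS.
have [->|/set0P [p0 Sp0]] := eqVneq S set0; first by rewrite measure0 lee_fin.
have infS : has_inf S.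
  by split; [exists p0 | exists (p0 - d) => q Sq; have := diamS q p0 Sq Sp0; lra].
set I : set R := [set` `[inf S, inf S + d]].
have sub : S `<=` I.
  move=> q Sq; rewrite /I /= in_itv /=; apply/andP; split.
    exact: ge_inf (proj2 infS) _ Sq.
  apply/ler_addgt0Pr => e e0.
  have [p Sp pe] := inf_adherent e0 infS.
  by have := diamS p q Sp Sq; lra.
have mI : measurable I by exact: measurable_itv.
have lenI : (@lebesgue_measure R I <= d%:E)%E.
  rewrite /I lebesgue_measure_itv /= lte_fin; case: ifP => _; last by rewrite lee_fin.
  by rewrite -EFinB lee_fin; lra.
exact: le_trans (le_measure (@lebesgue_measure R) (mem_set mS) (mem_set mI) sub) lenI.
Qed.

(* A dilation set of an open convex set is open: a long chord through x stays long
   when x moves a little, by continuity of x |-> seg x y t. *)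
Lemma dilate_open (K : set V) (eps : R) : open K -> convex_set_Rn K ->
  0 < eps -> eps < 1 -> open (dilate K eps).
Proof.
move=> oK cK e0 e1; rewrite openE => x [Kx|[y]].
  by apply: filterS (open_nbhs_nbhs (conj oK Kx)) => z Kz; left.
rewrite integral_indic_seg // => long.
set S := seg x y @^-1` K `&` `[0%R, 1%R] in long.
have [p [q [[Kp p01] [[Kq q01] gap]]]] : exists p q, S p /\ S q /\ 1 - eps < q - p.
  apply: contrapT => nogap; move: long; rewrite ltNge => /negP; apply.
  apply: lebesgue_measure_le_diameter; [exact: measurable_seg_params | lra |].
  by move=> p q Sp Sq; rewrite leNgt; apply/negP => gap; apply: nogap; exists p, q.
move: p01 q01; rewrite /= !in_itv /= => /andP[p0 _] /andP[_ q1].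
have near_p : nbhs x [set z | K (seg z y p)].
  exact: seg_continuous_start (open_nbhs_nbhs (conj oK Kp)).
have near_q : nbhs x [set z | K (seg z y q)].
  exact: seg_continuous_start (open_nbhs_nbhs (conj oK Kq)).
apply: filterS (filterI near_p near_q) => z [Kzp Kzq]; right; exists y.
set I : set R := [set` `[p, q]].
have sub : I `<=` seg z y @^-1` K `&` `[0%R, 1%R].
  move=> t pqt; split; first exact: (seg_preimage_interval cK Kzp Kzq) pqt.
  by move: pqt; rewrite /I /= !in_itv /= => /andP[pt tq]; apply/andP; split; lra.
have long_I : ((1 - eps)%:E < @lebesgue_measure R I)%E.
  by rewrite /I lebesgue_measure_itv /= lte_fin ifT -?EFinB ?lte_fin //; lra.
rewrite integral_indic_seg //; apply: (lt_le_trans long_I).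
have mI : measurable I by exact: measurable_itv.
exact: (le_measure (@lebesgue_measure R) (mem_set mI)
  (mem_set (measurable_seg_params z y oK)) sub).
Qed.

End DilationSets.

Lemma open_measurable_Rn (R : realType) (n : nat) (A : set (Rn R n)) :
  open (A : set 'rV[R]_n) -> measurable A.
Proof. by move=> oA; apply: sub_sigma_algebra. Qed.

Section DensityChange.
Variables (R : realType) (n : nat).
Local Notation T := (Rn R n).
Variable mu : probability T R.
Variables (Om : set T) (h : T -> R) (b : R).
Hypothesis oOm : open (Om : set 'rV[R]_n).
Hypothesis muOm : mu Om = 1%E.
Hypothesis b1 : 1 < b.
Hypothesis mh : measurable_fun Om h.
Hypothesis hb : forall x, Om x -> b^-1 <= h x <= b.
Local Open Scope ereal_scope.

Let mOm : measurable Om := open_measurable_Rn oOm.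
Let b0 : (0 < b)%R := lt_trans ltr01 b1.

Definition nu (A : set T) := \int[mu]_(x in A `&` Om) (h x)%:E.

Lemma density_ge0 x : Om x -> (0 <= h x)%R.
Proof. by move/hb/andP => [+ _]; apply: le_trans; rewrite invr_ge0 ltW. Qed.

Lemma measurable_density (D : set T) : measurable D -> D `<=` Om ->
  measurable_fun D (fun x => (h x)%:E).
Proof. by move=> mD DO; apply/measurable_EFinP; apply: measurable_funS mh. Qed.

Lemma integral_density_bounds (D : set T) : measurable D -> D `<=` Om ->
  (b^-1)%:E * mu D <= \int[mu]_(x in D) (h x)%:E <= b%:E * mu D.
Proof.
move=> mD DO; rewrite -!(integral_cst mu mD); apply/andP; split.
- apply: ge0_le_integral => //.
  + by move=> x _; rewrite lee_fin invr_ge0 ltW.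
  + exact: measurable_density.
  + by move=> x Dx; rewrite lee_fin; case/andP: (hb (DO x Dx)).
- apply: ge0_le_integral => //.
  + by move=> x Dx; rewrite lee_fin density_ge0 //; apply: DO.
  + exact: measurable_density.
  + by move=> x Dx; rewrite lee_fin; case/andP: (hb (DO x Dx)).
Qed.

Lemma integral_density_fin_num (D : set T) : measurable D -> D `<=` Om ->
  \int[mu]_(x in D) (h x)%:E \is a fin_num.
Proof.
move=> mD DO; have /andP[lo up] := integral_density_bounds mD DO.
rewrite fin_numElt; apply/andP; split.
  apply: (lt_le_trans _ lo); apply: (@lt_le_trans _ _ 0); first exact: ltNy0.
  by rewrite mule_ge0 // lee_fin invr_ge0 ltW.
by apply: (le_lt_trans up); rewrite -(fineK (fin_num_measure mu _ mD)) -EFinM ltry.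
Qed.

Lemma setI_Om (K : set T) : K `<=` Om -> K `&` Om = K.
Proof. by move=> KO; apply/seteqP; split => x; [case|move=> Kx; split => //; apply: KO]. Qed.

(* Since mu is carried by Om, enlarging K to E increases nu by at least b^-1 times
   the increase of mu. *)
Lemma nu_increment_ge (K E : set T) : measurable K -> measurable E ->
  K `<=` Om -> K `<=` E -> (b^-1)%:E * (mu E - mu K) <= nu E - nu K.
Proof.
move=> mK mE KO KE.
set D := (E `&` Om) `\` K.
have mD : measurable D by apply: measurableD => //; apply: measurableI.
have DO : D `<=` Om by move=> x [[]].
have eE : E `&` Om = K `|` D.
  apply/seteqP; split => [x [Ex Ox]|x [Kx|[]//]]; last by split; [apply: KE|apply: KO].
  by have [Kx|nKx] := pselect (K x); [left|right].
have -> : nu E - nu K = \int[mu]_(x in D) (h x)%:E.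
  rewrite /nu (setI_Om KO) eE ge0_integral_setU //.
  - by rewrite addeAC subee ?add0e // integral_density_fin_num.
  - by rewrite -eE; apply: measurable_density; [apply: measurableI|move=> x []].
  - by move=> x; rewrite -eE => -[_ Ox]; rewrite lee_fin density_ge0.
  - by rewrite disj_set2E; apply/eqP/seteqP; split => x // [Kx [_ nKx]].
have -> : mu E - mu K = mu (E `\` K).
  by rewrite (measureDI mu mE mK) setIidr // addeK // fin_num_measure.
apply: le_trans (proj1 (andP (integral_density_bounds mD DO))).
apply: lee_wpmul2l; first by rewrite lee_fin invr_ge0 ltW.
have mC : measurable (~` Om) by apply: measurableC.
have muC : mu (~` Om) = 0 by rewrite (probability_setC mu mOm) muOm subee.
apply: (@le_trans _ _ (mu (D `|` ~` Om))).
  apply: le_measure; rewrite ?inE; [exact: measurableD|exact: measurableU|].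
  by move=> x [Ex nKx]; have [Ox|nOx] := pselect (Om x); [left|right].
apply: (le_trans (measureU2 mu mD mC)).
by rewrite [X in _ + X](_ : _ = 0) ?adde0 //; exact: muC.
Qed.

Lemma nu_mass_split (K : set T) : measurable K -> K `<=` Om ->
  \int[mu]_(x in Om) (h x)%:E = 1 ->
  nu K + \int[mu]_(x in Om `\` K) (h x)%:E = 1.
Proof.
move=> mK KO hOm.
have eO : Om = K `|` (Om `\` K).
  apply/seteqP; split => [x Ox|x [Kx|[]//]]; last exact: KO.
  by have [Kx|nKx] := pselect (K x); [left|right].
rewrite -hOm /nu (setI_Om KO) [in RHS]eO ge0_integral_setU //.
- exact: measurableD.
- by rewrite -eO; apply: measurable_density.
- by move=> x; rewrite -eO => Ox; rewrite lee_fin density_ge0.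
- by rewrite disj_set2E; apply/eqP/seteqP; split => x // [Kx [_ nKx]].
Qed.

Lemma nu_bounds (K : set T) : measurable K -> K `<=` Om ->
  \int[mu]_(x in Om) (h x)%:E = 1 ->
  [/\ (0 <= fine (mu K) <= 1)%R, (0 <= fine (nu K) <= 1)%R,
      (fine (nu K) <= b * fine (mu K))%R &
      (1 - fine (nu K) <= b * (1 - fine (mu K)))%R].
Proof.
move=> mK KO hOm.
have mC : measurable (Om `\` K) by exact: measurableD.
have CO : Om `\` K `<=` Om by move=> x [].
have muC : mu (Om `\` K) = 1 - mu K.
  rewrite measureD // ?setIidr //; first by congr (_ - _); exact: muOm.
  exact: le_lt_trans (probability_le1 mu mOm) (ltry 1).
have /andP[lK uK] := integral_density_bounds mK KO.
have /andP[lC uC] := integral_density_bounds mC CO.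
have split1 := nu_mass_split mK KO hOm.
have fmK : mu K \is a fin_num by apply: fin_num_measure.
have m01 : (0 <= fine (mu K) <= 1)%R.
  by rewrite -!lee_fin fineK // measure_ge0 probability_le1.
move: lK uK lC uC split1; rewrite muC /nu (setI_Om KO).
rewrite -(fineK (integral_density_fin_num mK KO)).
rewrite -(fineK (integral_density_fin_num mC CO)) -(fineK fmK).
rewrite -EFinB -!EFinM -EFinD !lee_fin => lK uK lC uC [] split1.
have bi0 : (0 <= b^-1)%R by rewrite invr_ge0 ltW.
move: m01 => /andP[m0 m1].
have lo_K : (0 <= b^-1 * fine (mu K))%R by apply: mulr_ge0.
have lo_C : (0 <= b^-1 * (1 - fine (mu K)))%R by rewrite mulr_ge0 // subr_ge0.
by split; rewrite ?m0 ?m1 //; try (apply/andP; split); lra.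
Qed.

Lemma nu_dilation_increment (K : set T) : open (K : set 'rV[R]_n) ->
  convex_set_Rn K -> K `<=` Om ->
  \forall eps \near (0%R : R)^'+,
    (b^-1)%:E * ((mu (dilate K eps) - mu K) * (eps^-1)%:E) <=
    (nu (dilate K eps) - nu K) * (eps^-1)%:E.
Proof.
move=> oK cK KO; near=> eps.
have e0 : (0 < eps)%R by near: eps; exact: nbhs_right_gt.
have e1 : (eps < 1)%R by near: eps; exact: nbhs_right_lt.
have mKe : measurable (dilate K eps : set T).
  by apply: open_measurable_Rn; apply: dilate_open.
have Ke : K `<=` dilate K eps by move=> x Kx; left.
rewrite muleA; apply: lee_wpmul2r; first by rewrite lee_fin invr_ge0 ltW.
exact: nu_increment_ge (open_measurable_Rn oK) mKe KO Ke.
Unshelve. all: by end_near.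
Qed.

End DensityChange.

Theorem corollaryc (R : realType) (n : nat)
    (mu : probability (Rn R n) R) (Om : set 'rV[R]_n)
    (h : 'rV[R]_n -> R) (b kappa : R) :
  sym_convex_domain Om ->
  mu (Om : set (Rn R n)) = 1%E ->
  (\int[mu]_x (euclid_norm (x : 'rV[R]_n))%:E < +oo)%E ->
  1 < b ->
  measurable_fun (Om : set (Rn R n)) (h : Rn R n -> R) ->
  (forall x, Om x -> b^-1 <= h x <= b) ->
  (\int[mu]_(x in (Om : set (Rn R n))) (h x)%:E = 1)%E ->
  0 < kappa ->
  dilation_ineq (mu : set (Rn R n) -> \bar R) Om kappa ->
  dilation_ineq (fun A : set (Rn R n) => \int[mu]_(x in A `&` Om) (h x)%:E)%E
                Om (b ^- 2 * kappa).
Proof.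
move=> [_ [oOm _]] muOm _ b1 mh hb hOm k0 dil K KK.
have [_ [_ [oK [cK KO]]]] := KK.
have [m01 v01 vbm vbm'] := nu_bounds oOm muOm b1 mh hb (open_measurable_Rn oK) KO hOm.
have binv0 : 0 < b^-1 by rewrite invr_gt0 (lt_trans ltr01 b1).
have nu_deriv := limf_einf_scale_le (at_right_proper_filter 0) binv0 (dil K KK)
  (nu_dilation_increment oOm muOm b1 mh hb oK cK KO).
apply: le_trans nu_deriv; rewrite lee_fin.
exact: profile_comparison.
Qed.
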